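(* Let $\mathbf{x}$ be a feasible solution of $\textsc{Dir-MC-Rel}$ and let $\theta$ be uniform on $(0,1)$. Then $\mathbb{E}\big[\sum_{e\in C(\theta)}w_e\big]\le 2\sum_{e\in E}w_e x_e$.
   Context: $G=(V,E)$ is a directed graph with non-negative edge weights $w_e$ and distinct terminals $s_1,\dots,s_k$, $k\ge2$. For $i\neq j$, $\mathcal{P}_{ij}$ is the set of directed paths from $s_i$ to $s_j$ in $G$. $\textsc{Dir-MC-Rel}$: minimize $\sum_e w_e x_e$ s.t. $\sum_{e\in p}x_e\ge1$ for all $p\in\mathcal{P}_{ij}$, $i\ne j$, and $x\ge0$. Given feasible $\mathbf{x}$, form $G^+$ by adding new vertices $t_1,\dots,t_k$ and new edges $(t_i,s_j)$ for all $i\neq j$, each with $x$-value $0$. For vertices $u,v$ of $G^+$, $d(u,v)$ is the length of a shortest directed path from $u$ to $v$ in $G^+$ with edge lengths $\mathbf{x}$ ($+\infty$ if none). $B(v,r)=\{u: d(v,u)\le r\}$. For a vertex set $A$, $\delta^+(A)$ is the set of edges of $G^+$ with tail in $A$ and head not in $A$. For $\theta\in(0,1)$, $C(\theta)=\bigcup_{i=1}^k\delta^+(B(t_i,\theta))$. *)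

(* classical reals, Riemann integral for the expectation. *)
From Stdlib Require Import Reals List Arith ClassicalEpsilon.
Import ListNotations.
Open Scope R_scope.

Fixpoint walk {V Ed : Type} (ok : Ed -> Prop) (tl hd : Ed -> V)
    (u : V) (p : list Ed) (v : V) : Prop :=
  match p with
  | nil => u = v
  | e :: p' => ok e /\ tl e = u /\ walk ok tl hd (hd e) p' v
  end.

Definition is_path {V Ed : Type} (ok : Ed -> Prop) (tl hd : Ed -> V)
    (u : V) (p : list Ed) (v : V) : Prop :=
  walk ok tl hd u p v /\ NoDup (u :: map hd p).

Definition path_len {Ed : Type} (len : Ed -> R) (p : list Ed) : R :=
  fold_right (fun e acc => len e + acc) 0 p.

(** The input graph G: vertices 0..nV-1, edges indexed 0..m-1 where
    m = length E, edge e goes from fst (nth e E) to snd (nth e E). *)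
Definition etail (E : list (nat * nat)) (e : nat) : nat := fst (nth e E (0%nat, 0%nat)).
Definition ehead (E : list (nat * nat)) (e : nat) : nat := snd (nth e E (0%nat, 0%nat)).
Definition eok (E : list (nat * nat)) (e : nat) : Prop := (e < length E)%nat.

Definition feasible (E : list (nat * nat)) (k : nat) (s : nat -> nat) (x : nat -> R) : Prop :=
  (forall e, (e < length E)%nat -> 0 <= x e) /\
  (forall i j p, (i < k)%nat -> (j < k)%nat -> i <> j ->
     is_path (eok E) (etail E) (ehead E) (s i) p (s j) ->
     1 <= path_len x p).

(** The graph G^+: vertices [inl v] (v of G) and [inr i] (= t_i);
    edges [inl e] (edge e of G) and [inr (i,j)] (= (t_i, s_j), i <> j). *)
Definition plus_ok (E : list (nat * nat)) (k : nat) (f : nat + (nat * nat)) : Prop :=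
  match f with
  | inl e => (e < length E)%nat
  | inr (i, j) => (i < k)%nat /\ (j < k)%nat /\ i <> j
  end.
Definition plus_tl (E : list (nat * nat)) (f : nat + (nat * nat)) : nat + nat :=
  match f with inl e => inl (etail E e) | inr (i, _) => inr i end.
Definition plus_hd (E : list (nat * nat)) (s : nat -> nat) (f : nat + (nat * nat)) : nat + nat :=
  match f with inl e => inl (ehead E e) | inr (_, j) => inl (s j) end.
Definition plus_len (x : nat -> R) (f : nat + (nat * nat)) : R :=
  match f with inl e => x e | inr _ => 0 end.

(* u ∈ B(v, r) in G^+, i.e. d(v,u) <= r: the shortest-path length is a
   minimum over the finitely many directed paths, so d(v,u) <= r iff some
   directed path from v to u has length <= r (d = +oo if there is none). *)
Definition in_ball E k s x (v : nat + nat) (r : R) (u : nat + nat) : Prop :=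
  exists p, is_path (plus_ok E k) (plus_tl E) (plus_hd E s) v p u /\
            path_len (plus_len x) p <= r.

Definition in_delta_out E k s (A : nat + nat -> Prop) (f : nat + (nat * nat)) : Prop :=
  plus_ok E k f /\ A (plus_tl E f) /\ ~ A (plus_hd E s f).

Definition in_cut E k s x (theta : R) (f : nat + (nat * nat)) : Prop :=
  exists i, (i < k)%nat /\ in_delta_out E k s (in_ball E k s x (inr i) theta) f.

Definition pdec (P : Prop) : bool :=
  if excluded_middle_informative P then true else false.

Definition cut_weight E k s (w x : nat -> R) (theta : R) : R :=
  fold_right Rplus 0
    (map (fun e => if pdec (in_cut E k s x theta (inl e)) then w e else 0)
         (seq 0 (length E))).

Definition lp_value (E : list (nat * nat)) (w x : nat -> R) : R :=
  fold_right Rplus 0 (map (fun e => w e * x e) (seq 0 (length E))).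

From Stdlib Require Import Reals List Lra Lia Classical ClassicalEpsilon.
Import ListNotations.
Open Scope R_scope.

(* For an edge e = (a, b) of G, let d1 <= d2 be the distances from a to its
   nearest and to its second nearest terminal.  As d(t_i, a) is the minimum of
   d(s_j, a) over j <> i, it equals d1 or d2; and e leaves B(t_i, θ) only if
   d(t_i, a) <= θ < d(t_i, b) <= d(t_i, a) + x_e.  So e ∈ C(θ) forces θ into
   one of two windows of length x_e, whence Pr[e ∈ C(θ)] <= 2 x_e, and the
   bound follows by linearity.
   The distances may be infinite, so they are handled through the predicates
   "some (two) terminal(s) within θ", which are upward closed in θ. *)

Definition indicator (Q : R -> Prop) (v t : R) : R := if pdec (Q t) then v else 0.

Lemma indicator_of_true (Q : R -> Prop) v t : Q t -> indicator Q v t = v.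
Proof. unfold indicator, pdec; destruct (excluded_middle_informative (Q t)); tauto. Qed.

Lemma indicator_of_false (Q : R -> Prop) v t : ~ Q t -> indicator Q v t = 0.
Proof. unfold indicator, pdec; destruct (excluded_middle_informative (Q t)); tauto. Qed.

Lemma indicator_bounds Q v t : 0 <= v -> 0 <= indicator Q v t <= v.
Proof. unfold indicator; destruct (pdec (Q t)); lra. Qed.

Lemma indicator_le_of_imp (P Q : R -> Prop) v t :
  0 <= v -> (P t -> Q t) -> indicator P v t <= indicator Q v t.
Proof.
  intros Hv HPQ. destruct (classic (P t)) as [HP|HP].
  - rewrite !indicator_of_true; auto; lra.
  - rewrite indicator_of_false by exact HP. apply indicator_bounds, Hv.
Qed.

Lemma IsStepFun_constant_inside (f : R -> R) (a b : R) : a <= b ->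
  (forall t1 t2, a < t1 -> t1 <= t2 -> t2 < b -> f t1 = f t2) -> IsStepFun f a b.
Proof.
  intros Hab Hconst. exists [a; b], [f ((a + b) / 2)].
  unfold adapted_couple; split; [|split; [|split; [|split]]].
  - intros i Hi; simpl in Hi; destruct i; [simpl; lra | lia].
  - simpl; unfold Rmin; destruct (Rle_dec a b); lra.
  - simpl; unfold Rmax; destruct (Rle_dec a b); lra.
  - reflexivity.
  - intros i Hi; simpl in Hi; destruct i; [|lia]; simpl.
    intros t [Ht1 Ht2].
    destruct (Rle_dec t ((a + b) / 2)).
    + apply Hconst; lra.
    + symmetry; apply Hconst; lra.
Qed.

Lemma IsStepFun_breakpoints (f : R -> R) (L : list R) : forall a b, a <= b ->
  (forall t1 t2, a < t1 -> t1 <= t2 -> t2 < b ->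
     (forall c, In c L -> ~ (t1 <= c <= t2)) -> f t1 = f t2) ->
  IsStepFun f a b.
Proof.
  induction L as [|c L IH]; intros a b Hab Hconst.
  - apply IsStepFun_constant_inside; [exact Hab|].
    intros t1 t2 H1 H2 H3; apply Hconst; auto; intros c [].
  - assert (Hsub : forall a' b', a' <= b' -> a <= a' -> b' <= b ->
              c <= a' \/ b' <= c -> IsStepFun f a' b').
    { intros a' b' Hab' Ha Hb Hc. apply IH; [exact Hab'|].
      intros t1 t2 H1 H2 H3 Hout. apply Hconst; try lra.
      intros c' [<-|Hc']; [lra | apply Hout; exact Hc']. }
    destruct (Rlt_dec a c), (Rlt_dec c b).
    + apply StepFun_P46 with c; apply Hsub; lra.
    + apply Hsub; lra.
    + apply Hsub; lra.
    + apply Hsub; lra.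
Qed.

Lemma Riemann_integrable_StepFun (f : R -> R) (a b : R) :
  IsStepFun f a b -> Riemann_integrable f a b.
Proof.
  intros Hf eps. exists (mkStepFun Hf), (mkStepFun (StepFun_P4 a b 0)). split.
  - intros t _. simpl. unfold fct_cte. rewrite Rminus_diag, Rabs_R0. lra.
  - rewrite StepFun_P18, Rmult_0_l, Rabs_R0. apply cond_pos.
Qed.

Definition piecewise_constant (Q : R -> Prop) (L : list R) : Prop :=
  forall t1 t2, t1 <= t2 -> (forall c, In c L -> ~ (t1 <= c <= t2)) -> (Q t1 <-> Q t2).

Lemma Riemann_integrable_indicator (Q : R -> Prop) L v a b :
  piecewise_constant Q L -> a <= b -> Riemann_integrable (indicator Q v) a b.
Proof.
  intros HQ Hab. apply Riemann_integrable_StepFun, IsStepFun_breakpoints with L; auto.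
  intros t1 t2 _ Ht _ Hout. specialize (HQ t1 t2 Ht Hout).
  destruct (classic (Q t1)).
  - rewrite !indicator_of_true; tauto.
  - rewrite !indicator_of_false; tauto.
Qed.

Section PiecewiseConstant.
Implicit Types (P Q : R -> Prop) (L : list R).

Lemma piecewise_constant_const (P : Prop) : piecewise_constant (fun _ => P) nil.
Proof. intros t1 t2 _ _. tauto. Qed.

Lemma piecewise_constant_ext P Q L :
  (forall t, P t <-> Q t) -> piecewise_constant P L -> piecewise_constant Q L.
Proof. intros HPQ HP t1 t2 Ht Hout. rewrite <- !HPQ. apply HP; auto. Qed.

Lemma piecewise_constant_incl Q L L' :
  incl L L' -> piecewise_constant Q L -> piecewise_constant Q L'.
Proof. intros Hincl HQ t1 t2 Ht Hout. apply HQ; auto. Qed.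

Lemma piecewise_constant_not Q L :
  piecewise_constant Q L -> piecewise_constant (fun t => ~ Q t) L.
Proof. intros HQ t1 t2 Ht Hout. specialize (HQ t1 t2 Ht Hout). tauto. Qed.

Lemma piecewise_constant_and P Q L1 L2 : piecewise_constant P L1 ->
  piecewise_constant Q L2 -> piecewise_constant (fun t => P t /\ Q t) (L1 ++ L2).
Proof.
  intros HP HQ t1 t2 Ht Hout.
  apply (piecewise_constant_incl _ _ _ (incl_appl L2 (incl_refl L1))) in HP.
  apply (piecewise_constant_incl _ _ _ (incl_appr L1 (incl_refl L2))) in HQ.
  specialize (HP t1 t2 Ht Hout); specialize (HQ t1 t2 Ht Hout). tauto.
Qed.

Lemma piecewise_constant_or P Q L1 L2 : piecewise_constant P L1 ->
  piecewise_constant Q L2 -> piecewise_constant (fun t => P t \/ Q t) (L1 ++ L2).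
Proof.
  intros HP HQ t1 t2 Ht Hout.
  apply (piecewise_constant_incl _ _ _ (incl_appl L2 (incl_refl L1))) in HP.
  apply (piecewise_constant_incl _ _ _ (incl_appr L1 (incl_refl L2))) in HQ.
  specialize (HP t1 t2 Ht Hout); specialize (HQ t1 t2 Ht Hout). tauto.
Qed.

Lemma piecewise_constant_shift Q L y :
  piecewise_constant Q L -> piecewise_constant (fun t => Q (t - y)) (map (fun c => c + y) L).
Proof.
  intros HQ t1 t2 Ht Hout. apply HQ; [lra|]. intros c Hc Hin.
  apply (Hout (c + y)); [apply (in_map (fun c => c + y)); exact Hc | lra].
Qed.

Lemma piecewise_constant_exists_lt (Q : nat -> R -> Prop) n :
  (forall j, (j < n)%nat -> exists L, piecewise_constant (Q j) L) ->
  exists L, piecewise_constant (fun t => exists j, (j < n)%nat /\ Q j t) L.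
Proof.
  induction n as [|n IH]; intros HQ.
  - exists nil. apply piecewise_constant_ext with (fun _ => False).
    + intro t. split; [tauto | intros [j [Hj _]]; lia].
    + apply piecewise_constant_const.
  - destruct IH as [L1 H1]. { intros j Hj; apply HQ; lia. }
    destruct (HQ n (Nat.lt_succ_diag_r n)) as [L2 H2].
    exists (L1 ++ L2).
    eapply piecewise_constant_ext; [|exact (piecewise_constant_or _ _ _ _ H1 H2)].
    intro t. split.
    + intros [[j [Hj HQj]] | HQn]; [exists j | exists n]; split; auto; lia.
    + intros [j [Hj HQj]]. destruct (Nat.eq_dec j n) as [->|Hjn]; [right; exact HQj|].
      left; exists j; split; [lia | exact HQj].
Qed.

Lemma piecewise_constant_interval c d : piecewise_constant (fun t => c <= t <= d) [c; d].
Proof.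
  intros t1 t2 Ht Hout.
  assert (Hc : ~ (t1 <= c <= t2)) by (apply Hout; simpl; auto).
  assert (Hd : ~ (t1 <= d <= t2)) by (apply Hout; simpl; auto).
  split; intros [H1 H2]; split; lra.
Qed.

End PiecewiseConstant.

Definition upward_closed (Q : R -> Prop) : Prop := forall t t', Q t -> t <= t' -> Q t'.

Definition entered_within (Q : R -> Prop) (y t : R) : Prop := Q t /\ ~ Q (t - y).

Lemma upward_closed_cases (Q : R -> Prop) : upward_closed Q ->
  (forall t, ~ Q t) \/ (forall t, Q t) \/
  exists tau, (forall t, t < tau -> ~ Q t) /\ (forall t, tau < t -> Q t).
Proof.
  intros Hup.
  destruct (classic (exists t, Q t)) as [[t0 Ht0]|Hnone];
    [| left; intros t Ht; apply Hnone; exists t; exact Ht].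
  destruct (classic (exists t, ~ Q t)) as [[t1 Ht1]|Hall];
    [| right; left; intros t; apply NNPP; intro Hn; apply Hall; exists t; exact Hn].
  right; right.
  assert (Hbound : bound (fun t => ~ Q t)).
  { exists t0. intros t Ht. destruct (Rle_dec t t0); auto.
    exfalso; apply Ht, Hup with t0; auto; lra. }
  destruct (completeness _ Hbound (ex_intro _ t1 Ht1)) as [tau [Hub Hlub]].
  exists tau. split.
  - intros t Ht HQ. enough (tau <= t) by lra. apply Hlub. intros t' Ht'.
    destruct (Rle_dec t' t); auto. exfalso; apply Ht', Hup with t; auto; lra.
  - intros t Ht. apply NNPP; intro HQ. specialize (Hub t HQ). lra.
Qed.

Lemma piecewise_constant_upward_closed (Q : R -> Prop) :
  upward_closed Q -> exists L, piecewise_constant Q L.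
Proof.
  intros Hup. destruct (upward_closed_cases Q Hup) as [Hnone|[Hall|[tau [Hbelow Habove]]]].
  - exists nil. intros t1 t2 _ _. split; intro HQ; exfalso; eapply Hnone; eauto.
  - exists nil. intros t1 t2 _ _. split; intros _; apply Hall.
  - exists [tau]. intros t1 t2 Ht Hout.
    assert (Htau : ~ (t1 <= tau <= t2)) by (apply Hout; left; reflexivity).
    destruct (Rlt_dec t2 tau).
    + split; intro HQ; exfalso; [apply (Hbelow t1) | apply (Hbelow t2)]; auto; lra.
    + split; intros _; apply Habove; lra.
Qed.

Lemma piecewise_constant_entered_within (Q : R -> Prop) y :
  upward_closed Q -> exists L, piecewise_constant (entered_within Q y) L.
Proof.
  intros Hup. destruct (piecewise_constant_upward_closed Q Hup) as [L HL].
  eexists. apply piecewise_constant_and; [exact HL|].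
  apply piecewise_constant_not, piecewise_constant_shift, HL.
Qed.

Lemma entered_within_interval (Q : R -> Prop) y : upward_closed Q ->
  exists tau, forall t, entered_within Q y t -> tau <= t <= tau + y.
Proof.
  intros Hup. destruct (upward_closed_cases Q Hup) as [Hnone|[Hall|[tau [Hbelow Habove]]]].
  - exists 0. intros t [HQ _]. destruct (Hnone t HQ).
  - exists 0. intros t [_ HQ]. destruct (HQ (Hall (t - y))).
  - exists tau. intros t [HQ HnQ]. split.
    + destruct (Rle_dec tau t) as [|Hlt]; auto.
      destruct (Hbelow t (Rnot_le_lt _ _ Hlt) HQ).
    + destruct (Rle_dec t (tau + y)) as [|Hlt]; auto.
      exfalso; apply HnQ, Habove; lra.
Qed.

Lemma RiemannInt_interval_indicator_le a b c d
  (pr : Riemann_integrable (indicator (fun t => c <= t <= d) 1) a b) :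
  a <= b -> c <= d -> RiemannInt pr <= d - c.
Proof.
  intros Hab Hcd.
  set (clamp := fun z => Rmax a (Rmin b z)).
  assert (Hclamp : a <= clamp c <= clamp d /\ clamp d <= b /\ clamp d - clamp c <= d - c
                   /\ (forall t, a < t < clamp c -> t < c)
                   /\ (forall t, clamp d < t < b -> d < t)).
  { unfold clamp, Rmax, Rmin. repeat destruct (Rle_dec _ _); repeat split; intros; lra. }
  destruct Hclamp as [Hc' [Hd' [Hlen [Hleft Hright]]]].
  set (f := indicator (fun t => c <= t <= d) 1).
  assert (Hint : forall u v, u <= v -> Riemann_integrable f u v).
  { intros u v Huv. exact (Riemann_integrable_indicator _ _ 1 u v (piecewise_constant_interval c d) Huv). }
  pose proof (Hint a (clamp c) ltac:(lra)) as p1.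
  pose proof (Hint (clamp c) (clamp d) ltac:(lra)) as p2.
  pose proof (Hint (clamp d) b ltac:(lra)) as p3.
  pose proof (Hint a (clamp d) ltac:(lra)) as p12.
  rewrite <- (RiemannInt_P26 p12 p3 pr), <- (RiemannInt_P26 p1 p2 p12).
  assert (I1 : RiemannInt p1 <= 0 * (clamp c - a)).
  { refine (proj2 (RiemannInt_const_bound (l := 0) _ _ _)); [lra|].
    intros t Ht. specialize (Hleft t Ht).
    unfold f; rewrite indicator_of_false; lra. }
  assert (I2 : RiemannInt p2 <= 1 * (clamp d - clamp c)).
  { refine (proj2 (RiemannInt_const_bound (l := 0) _ _ _)); [lra|].
    intros t _. apply indicator_bounds; lra. }
  assert (I3 : RiemannInt p3 <= 0 * (b - clamp d)).
  { refine (proj2 (RiemannInt_const_bound (l := 0) _ _ _)); [lra|].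
    intros t Ht. specialize (Hright t Ht).
    unfold f; rewrite indicator_of_false; lra. }
  lra.
Qed.

Lemma RiemannInt_entered_within_le (Q : R -> Prop) y a b
  (pr : Riemann_integrable (indicator (entered_within Q y) 1) a b) :
  upward_closed Q -> 0 <= y -> a <= b -> RiemannInt pr <= y.
Proof.
  intros Hup Hy Hab. destruct (entered_within_interval Q y Hup) as [tau Htau].
  pose proof (Riemann_integrable_indicator _ _ 1 a b
                (piecewise_constant_interval tau (tau + y)) Hab) as pint.
  enough (RiemannInt pr <= RiemannInt pint).
  { pose proof (RiemannInt_interval_indicator_le a b tau (tau + y) pint Hab). lra. }
  apply RiemannInt_P19; [exact Hab|]. intros t _.
  apply indicator_le_of_imp; [lra | apply Htau].
Qed.

Lemma RiemannInt_le_scaled_sum (f g h : R -> R) a b c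
  (pf : Riemann_integrable f a b) (pg : Riemann_integrable g a b)
  (ph : Riemann_integrable h a b) :
  a <= b -> (forall t, a < t < b -> f t <= c * g t + c * h t) ->
  RiemannInt pf <= c * RiemannInt pg + c * RiemannInt ph.
Proof.
  intros Hab Hle.
  pose proof (RiemannInt_P14 a b 0) as p0.
  pose proof (RiemannInt_P10 c p0 pg) as pg'.
  pose proof (RiemannInt_P10 c pg' ph) as pgh.
  assert (Hsum : RiemannInt pgh = c * RiemannInt pg + c * RiemannInt ph).
  { rewrite (RiemannInt_P13 pg' ph pgh), (RiemannInt_P13 p0 pg pg'), (RiemannInt_P15 p0).
    ring. }
  rewrite <- Hsum.
  apply RiemannInt_P19; [exact Hab|]. intros t Ht. unfold fct_cte.
  specialize (Hle t Ht). lra.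
Qed.

Section Walks.
Context {V Ed : Type} (ok : Ed -> Prop) (tl hd : Ed -> V) (len : Ed -> R).
Hypothesis len_nonneg : forall e, ok e -> 0 <= len e.

Lemma walk_app p1 p2 u v :
  walk ok tl hd u (p1 ++ p2) v <-> exists m, walk ok tl hd u p1 m /\ walk ok tl hd m p2 v.
Proof.
  revert u; induction p1 as [|e p1 IH]; intros u; simpl.
  - split; [intro W; exists u; auto | intros [m [-> W]]; exact W].
  - rewrite IH. split.
    + intros [Hok [Htl [m [W1 W2]]]]. exists m; auto.
    + intros [m [[Hok [Htl W1]] W2]]. split; [|split]; eauto.
Qed.

Lemma path_len_app p1 p2 : path_len len (p1 ++ p2) = path_len len p1 + path_len len p2.
Proof. induction p1 as [|e p1 IH]; simpl; [lra | rewrite IH; lra]. Qed.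

Lemma path_len_nonneg p u v : walk ok tl hd u p v -> 0 <= path_len len p.
Proof.
  revert u; induction p as [|e p IH]; intros u W; simpl; [lra|].
  destruct W as [Hok [_ W]]. pose proof (len_nonneg e Hok). pose proof (IH _ W). lra.
Qed.

Lemma walk_prefix p u v b : walk ok tl hd u p v -> In b (u :: map hd p) ->
  exists p1 p2, p = p1 ++ p2 /\ walk ok tl hd u p1 b.
Proof.
  revert u; induction p as [|e p IH]; intros u W Hb.
  - destruct Hb as [<-|[]]. exists nil, nil. simpl; auto.
  - destruct Hb as [<-|Hb].
    + exists nil, (e :: p). simpl; auto.
    + destruct W as [Hok [Htl W]]. destruct (IH _ W Hb) as [p1 [p2 [-> W1]]].
      exists (e :: p1), p2. simpl; auto.
Qed.

(* Appending [e] may revisit a vertex; then cutting the path there only shortens it. *)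
Lemma is_path_snoc_le u p a e : is_path ok tl hd u p a -> ok e -> tl e = a ->
  exists p', is_path ok tl hd u p' (hd e) /\ path_len len p' <= path_len len p + len e.
Proof.
  intros [W ND] Hok Htl. pose proof (len_nonneg e Hok) as He.
  destruct (classic (In (hd e) (u :: map hd p))) as [Hin|Hnew].
  - destruct (walk_prefix p u a _ W Hin) as [p1 [p2 [-> W1]]].
    exists p1. split.
    + split; [exact W1|]. rewrite map_app, app_comm_cons in ND.
      exact (NoDup_app_remove_r _ _ ND).
    + apply walk_app in W. destruct W as [m [_ W2]].
      rewrite path_len_app. pose proof (path_len_nonneg p2 m a W2). lra.
  - exists (p ++ [e]). split; [split|].
    + apply walk_app. exists a. simpl; auto.
    + rewrite map_app, app_comm_cons. apply NoDup_app; [exact ND | repeat constructor; auto|].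
      intros v Hv [<-|[]]. exact (Hnew Hv).
    + rewrite path_len_app. simpl. lra.
Qed.

End Walks.

Section AuxiliaryGraph.
Variables (E : list (nat * nat)) (k : nat) (s : nat -> nat) (x : nat -> R).
Hypothesis x_nonneg : forall e, (e < length E)%nat -> 0 <= x e.

Lemma plus_len_nonneg f : plus_ok E k f -> 0 <= plus_len x f.
Proof. destruct f as [e|[i j]]; simpl; intros; [apply x_nonneg; auto | lra]. Qed.

Lemma in_ball_upward_closed v u : upward_closed (fun t => in_ball E k s x v t u).
Proof. intros t t' [p [Hp Hlen]] Ht. exists p; split; [exact Hp | lra]. Qed.

Lemma in_ball_edge v e t : (e < length E)%nat ->
  in_ball E k s x v t (inl (etail E e)) -> in_ball E k s x v (t + x e) (inl (ehead E e)).
Proof.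
  intros He [p [Hp Hlen]].
  destruct (is_path_snoc_le (plus_ok E k) (plus_tl E) (plus_hd E s) (plus_len x)
              plus_len_nonneg v p _ (inl e) Hp He eq_refl) as [p' [Hp' Hlen']].
  exists p'. split; [exact Hp' | simpl in Hlen'; lra].
Qed.

(* Every path leaving t_i starts with an edge (t_i, s_j) of length 0. *)
Lemma in_ball_source i a t : (i < k)%nat ->
  in_ball E k s x (inr i) t (inl a) <->
  exists j, (j < k)%nat /\ j <> i /\ in_ball E k s x (inl (s j)) t (inl a).
Proof.
  intros Hi. split.
  - intros [[|f p] [[W ND] Hlen]]; [discriminate W|].
    destruct W as [Hok [Htl W]].
    destruct f as [e|[i' j]]; simpl in Htl; [discriminate|]. injection Htl as ->.
    destruct Hok as [_ [Hj Hji]].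
    exists j. repeat split; auto. exists p. split.
    + split; [exact W | inversion ND; assumption].
    + simpl in Hlen; lra.
  - intros [j [Hj [Hji [p [[W ND] Hlen]]]]].
    exists (inr (i, j) :: p). split; [split|].
    + simpl; auto.
    + constructor; [|exact ND]. intros [Heq|Hin]; [discriminate|].
      apply in_map_iff in Hin. destruct Hin as [[e|[c d]] [Heq _]]; discriminate.
    + simpl; lra.
Qed.

Definition terminal_near (a j : nat) (t : R) : Prop := in_ball E k s x (inl (s j)) t (inl a).

Definition one_terminal_near (a : nat) (t : R) : Prop :=
  exists j, (j < k)%nat /\ terminal_near a j t.

Definition two_terminals_near (a : nat) (t : R) : Prop :=
  exists j1 j2, (j1 < k)%nat /\ (j2 < k)%nat /\ j1 <> j2 /\
                terminal_near a j1 t /\ terminal_near a j2 t.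

Lemma one_terminal_near_upward_closed a : upward_closed (one_terminal_near a).
Proof.
  intros t t' [j [Hj Hnear]] Ht. exists j; split; [exact Hj|].
  exact (in_ball_upward_closed _ _ t t' Hnear Ht).
Qed.

Lemma two_terminals_near_upward_closed a : upward_closed (two_terminals_near a).
Proof.
  intros t t' [j1 [j2 [H1 [H2 [Hne [N1 N2]]]]]] Ht. exists j1, j2.
  repeat split; auto; eapply in_ball_upward_closed; eauto.
Qed.

Lemma in_cut_entered_within e t : (e < length E)%nat -> in_cut E k s x t (inl e) ->
  entered_within (one_terminal_near (etail E e)) (x e) t \/
  entered_within (two_terminals_near (etail E e)) (x e) t.
Proof.
  intros He [i [Hi [_ [Hin Hout]]]]. simpl in Hin, Hout.
  set (a := etail E e) in *.
  assert (Hfar : ~ in_ball E k s x (inr i) (t - x e) (inl a)).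
  { intro Hnear. apply Hout. replace t with (t - x e + x e) by lra.
    exact (in_ball_edge _ e _ He Hnear). }
  rewrite in_ball_source in Hin, Hfar by exact Hi.
  destruct Hin as [j [Hj [Hji Hnear_j]]].
  destruct (classic (one_terminal_near a (t - x e))) as [[j0 [Hj0 Hnear0]]|Hnone].
  - assert (j0 = i) as ->.
    { destruct (Nat.eq_dec j0 i); auto. exfalso; apply Hfar; exists j0; auto. }
    right. split.
    + exists j, i. repeat split; auto.
      apply (in_ball_upward_closed _ _ _ _ Hnear0). pose proof (x_nonneg e He). lra.
    + intros [j1 [j2 [H1 [H2 [Hne [N1 N2]]]]]]. apply Hfar.
      destruct (Nat.eq_dec j1 i) as [->|Hj1]; [exists j2 | exists j1]; auto.
  - left. split; [exists j; auto | exact Hnone].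
Qed.

End AuxiliaryGraph.

Section CutWeight.
Variables (E : list (nat * nat)) (k : nat) (s : nat -> nat) (w x : nat -> R).
Hypothesis x_nonneg : forall e, (e < length E)%nat -> 0 <= x e.
Hypothesis w_nonneg : forall e, (e < length E)%nat -> 0 <= w e.

Definition cut_indicator (e : nat) : R -> R :=
  indicator (fun t => in_cut E k s x t (inl e)) (w e).

Lemma piecewise_constant_in_cut e :
  exists L, piecewise_constant (fun t => in_cut E k s x t (inl e)) L.
Proof.
  apply piecewise_constant_exists_lt. intros i Hi.
  destruct (piecewise_constant_upward_closed _
              (in_ball_upward_closed E k s x (inr i) (plus_tl E (inl e)))) as [L1 H1].
  destruct (piecewise_constant_upward_closed _
              (in_ball_upward_closed E k s x (inr i) (plus_hd E s (inl e)))) as [L2 H2].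
  exists (nil ++ L1 ++ L2).
  apply piecewise_constant_and; [apply piecewise_constant_const|].
  apply piecewise_constant_and; [exact H1 | apply piecewise_constant_not, H2].
Qed.

Lemma Riemann_integrable_cut_indicator e : Riemann_integrable (cut_indicator e) 0 1.
Proof.
  destruct (constructive_indefinite_description _ (piecewise_constant_in_cut e)) as [L HL].
  exact (Riemann_integrable_indicator _ L (w e) 0 1 HL Rle_0_1).
Qed.

Lemma RiemannInt_cut_indicator_le e (pr : Riemann_integrable (cut_indicator e) 0 1) :
  (e < length E)%nat -> RiemannInt pr <= 2 * (w e * x e).
Proof.
  intros He. set (a := etail E e).
  pose proof (x_nonneg e He) as Hx. pose proof (w_nonneg e He) as Hw.
  destruct (constructive_indefinite_description _ (piecewise_constant_entered_within
              _ (x e) (one_terminal_near_upward_closed E k s x a))) as [L1 H1].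
  destruct (constructive_indefinite_description _ (piecewise_constant_entered_within
              _ (x e) (two_terminals_near_upward_closed E k s x a))) as [L2 H2].
  pose proof (Riemann_integrable_indicator _ _ 1 0 1 H1 Rle_0_1) as p1.
  pose proof (Riemann_integrable_indicator _ _ 1 0 1 H2 Rle_0_1) as p2.
  pose proof (RiemannInt_entered_within_le _ _ 0 1 p1
                (one_terminal_near_upward_closed E k s x a) Hx Rle_0_1).
  pose proof (RiemannInt_entered_within_le _ _ 0 1 p2
                (two_terminals_near_upward_closed E k s x a) Hx Rle_0_1).
  enough (RiemannInt pr <= w e * RiemannInt p1 + w e * RiemannInt p2) by nra.
  apply RiemannInt_le_scaled_sum; [exact Rle_0_1|]. intros t _.
  pose proof (indicator_bounds (entered_within (one_terminal_near E k s x a) (x e)) 1 t Rle_0_1).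
  pose proof (indicator_bounds (entered_within (two_terminals_near E k s x a) (x e)) 1 t Rle_0_1).
  unfold cut_indicator. destruct (classic (in_cut E k s x t (inl e))) as [Hcut|Hcut].
  - rewrite indicator_of_true by exact Hcut.
    destruct (in_cut_entered_within E k s x x_nonneg e t He Hcut) as [Hwin|Hwin];
      rewrite (indicator_of_true _ _ _ Hwin); nra.
  - rewrite indicator_of_false by exact Hcut. nra.
Qed.

Lemma RiemannInt_cut_sum_le l : (forall e, In e l -> (e < length E)%nat) ->
  exists pr : Riemann_integrable (fun t => fold_right Rplus 0 (map (fun e => cut_indicator e t) l)) 0 1,
    RiemannInt pr <= 2 * fold_right Rplus 0 (map (fun e => w e * x e) l).
Proof.
  induction l as [|e l IH]; intros Hl.
  - exists (RiemannInt_P14 0 1 0).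
    change (RiemannInt (RiemannInt_P14 0 1 0) <= 2 * 0). rewrite RiemannInt_P15. lra.
  - destruct IH as [pl Hpl]. { intros e' He'; apply Hl; right; exact He'. }
    pose proof (Riemann_integrable_cut_indicator e) as pe.
    pose proof (RiemannInt_P10 1 pe pl) as psum.
    assert (pr : Riemann_integrable
                   (fun t => fold_right Rplus 0 (map (fun e => cut_indicator e t) (e :: l))) 0 1).
    { eapply Riemann_integrable_ext; [|exact psum]. intros; simpl; lra. }
    exists pr.
    rewrite (RiemannInt_P18 pr psum Rle_0_1) by (intros; simpl; lra).
    rewrite (RiemannInt_P13 pe pl psum).
    pose proof (RiemannInt_cut_indicator_le e pe (Hl e (or_introl eq_refl))).
    simpl. lra.
Qed.

End CutWeight.

Theorem mainTheorem4
  (nV : nat) (E : list (nat * nat)) (k : nat) (s : nat -> nat) (w x : nat -> R)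
  (hE : forall e, (e < length E)%nat -> (etail E e < nV)%nat /\ (ehead E e < nV)%nat)
  (hw : forall e, (e < length E)%nat -> 0 <= w e)
  (hk : (2 <= k)%nat)
  (hs : forall i, (i < k)%nat -> (s i < nV)%nat)
  (hsd : forall i j, (i < k)%nat -> (j < k)%nat -> s i = s j -> i = j)
  (hx : feasible E k s x) :
  exists pr : Riemann_integrable (cut_weight E k s w x) 0 1,
    RiemannInt pr <= 2 * lp_value E w x.
Proof.
  destruct hx as [x_nonneg _].
  destruct (RiemannInt_cut_sum_le E k s w x x_nonneg hw (seq 0 (length E))) as [pr Hpr].
  { intros e He. apply in_seq in He. lia. }
  exists pr. exact Hpr.
Qed.
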